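(* For all $n\geq1$ and $i,j\in I$ one has $C^{(n)}_{-i,-j}=(-1)^{n-1}C^{(n)}_{ij}$. Moreover, for every $n\geq 1$ the element $c_n=\sum_{i\in I}C^{(n)}_{ii}$ is even and lies in the center of $U(\mathfrak{q}(N))$ (it commutes with every element of $U(\mathfrak{q}(N))$), and $c_n=0$ whenever $n$ is even.
   Context: Let $N\geq1$ and let $I=\{-N,\dots,-1,1,\dots,N\}$; all indices below range over $I$ unless stated otherwise. For $k\in I$ put $\bar k=0$ if $k>0$ and $\bar k=1$ if $k<0$. The Lie superalgebra $\mathfrak{q}(N)$ over $\mathbb{C}$ is the subalgebra of $\mathfrak{gl}(N|N)$ (with standard basis $E_{ij}$, $i,j\in I$, $E_{ij}$ of parity $\bar\imath+\bar\jmath$) spanned by $F_{ij}=E_{ij}+E_{-i,-j}$; thus $F_{-i,-j}=F_{ij}$, the $2N^2$ elements $F_{ij}$ with $i>0$ form a basis, $F_{ij}$ has parity $\bar\imath+\bar\jmath \bmod 2$, and $$[F_{ij}, F_{kl}] = \delta_{kj} F_{il} - (-1)^{(\bar{\imath}+ \bar{\jmath})(\bar{k} + \bar{l})} \delta_{il} F_{kj} + \delta_{k,-j} F_{-i,l} - (-1)^{(\bar{\imath} + \bar{\jmath})(\bar{k} + \bar{l})} \delta_{-i,l} F_{k,-j}.$$ For $n\geq1$ define elements of $U(\mathfrak{q}(N))$ by $$C^{(n)}_{ij} = \sum_{k_1,\ldots,k_{n-1}\in I}F_{ik_1} (-1)^{\bar{k}_1} F_{k_1k_2} (-1)^{\bar{k}_2}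 \cdots F_{k_{n-2}k_{n-1}} (-1)^{\bar{k}_{n-1}} F_{k_{n-1}j}$$ (so $C^{(1)}_{ij}=F_{ij}$), and $c_n=\sum_{i\in I}C^{(n)}_{ii}$. *)

From HB Require Import structures.
From mathcomp Require Import all_boot all_order all_algebra.
Set Implicit Arguments. Unset Strict Implicit. Unset Printing Implicit Defensive.
Import Order.TTheory GRing.Theory Num.Theory.
Local Open Scope ring_scope.

(* The index set I = {-N,...,-1,1,...,N}: (false, k) encodes k+1 > 0 and
   (true, k) encodes -(k+1) < 0, for k : 'I_N. *)
Definition idx (N : nat) := (bool * 'I_N)%type.

Definition negi N (i : idx N) : idx N := (~~ i.1, i.2).

Definition bar N (i : idx N) : bool := i.1.

Definition par N (i j : idx N) : bool := bar i (+) bar j.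

Definition qN_rel N (R : pzRingType) (A : lalgType R) (f : idx N -> idx N -> A) :=
  (forall i j, f (negi i) (negi j) = f i j) /\
  (forall i j k l,
     f i j * f k l - (-1) ^+ (par i j && par k l) * (f k l * f i j) =
       (k == j)%:R * f i l
     - (-1) ^+ (par i j && par k l) * ((i == l)%:R * f k j)
     + (k == negi j)%:R * f (negi i) l
     - (-1) ^+ (par i j && par k l) * ((negi i == l)%:R * f k (negi j))).

(* Cm f m i j = C^{(m+1)}_{ij} *)
Fixpoint Cm N (A : pzRingType) (f : idx N -> idx N -> A) (m : nat) (i j : idx N) : A :=
  match m with
  | 0 => f i j
  | m'.+1 => \sum_(k : idx N) f i k * ((-1) ^+ bar k * Cm f m' k j)
  end.

(* C^{(n)}_{ij}, meaningful for n >= 1 *)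
Definition Cn N (A : pzRingType) (f : idx N -> idx N -> A) (n : nat) (i j : idx N) : A :=
  Cm f n.-1 i j.

Definition cn N (A : pzRingType) (f : idx N -> idx N -> A) (n : nat) : A :=
  \sum_(i : idx N) Cn f n i i.

From HB Require Import structures.
From mathcomp Require Import all_boot all_order all_algebra.
Import Order.TTheory GRing.Theory Num.Theory.
Set Implicit Arguments. Unset Strict Implicit. Unset Printing Implicit Defensive.
Local Open Scope ring_scope.

(* C^(n+1) is the twisted matrix product F D C^(n) with D = diag((-1)^bar a).
   The super-commutator with F_kl obeys a graded Leibniz rule, so by induction
   on n every C^(n)_ij has the same bracket with F_kl as the generator F_ij,
   provided the q(N) relation is written in the symmetric form
   [G_ij, F_kl] = d_kj G_il + d_(k,-j) G_(i,-l) - (+-)(d_il G_kj + d_(-i,l) G_(-k,j)):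
   the extra terms produced at the summation index cancel in pairs.  On the
   diagonal the sign is +1 and the four terms telescope in the sum over i, so
   c_n is central.  The substitution a |-> -a in the matrix product gives
   C^(n)_(-i,-j) = (-1)^(n-1) C^(n)_ij, hence c_n = -c_n for even n, and c_n = 0
   in characteristic 0.  Each C^(n)_ij has the parity of F_ij, so c_n is even. *)

Lemma negiK N : involutive (@negi N).
Proof. by case=> b x; rewrite /negi /= negbK. Qed.

Lemma negi_inj N : injective (@negi N).
Proof. exact: inv_inj (@negiK N). Qed.

Lemma eq_negi N (a b : idx N) : (a == negi b) = (negi a == b).
Proof. by rewrite -(inj_eq (@negi_inj N)) negiK. Qed.

Lemma par_negi N (i j : idx N) : par (negi i) (negi j) = par i j.
Proof. by rewrite /par /bar /=; case: i.1; case: j.1. Qed.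

Lemma par_split N (i a j : idx N) q :
  (par i j && q) = (par i a && q) (+) (par a j && q).
Proof. by rewrite /par; case: (bar i); case: (bar a); case: (bar j); case: q. Qed.

Lemma bar_addb_par N (j k l : idx N) :
  bar k (+) (par k j && par k l) = bar l (+) (par l j && par k l).
Proof. by rewrite /par; case: (bar j); case: (bar k); case: (bar l). Qed.

Section RingFacts.
Variable R : pzRingType.

Lemma mulr_signCA (x y : R) n : x * ((-1) ^+ n * y) = (-1) ^+ n * (x * y).
Proof. by rewrite mulrA commr_sign -mulrA. Qed.

Lemma mulr_natCA (x y : R) n : x * (n%:R * y) = n%:R * (x * y).
Proof. by rewrite mulrA (commr_nat x) -mulrA. Qed.

Lemma sumr_delta (I : finType) (G : I -> R) l : \sum_a (a == l)%:R * G a = G l.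
Proof.
rewrite (bigD1 l) //= eqxx mul1r big1 ?addr0 // => a /negPf ->.
by rewrite mul0r.
Qed.

Definition scomm (s : bool) (x y : R) := x * y - (-1) ^+ s * (y * x).

Lemma scommMl s1 s2 (x y z : R) :
  scomm (s1 (+) s2) (x * y) z = x * scomm s2 y z + (-1) ^+ s2 * (scomm s1 x z * y).
Proof.
rewrite /scomm mulrBl !mulrBr (mulr_signCA x) -!mulrA subrKA.
by rewrite signr_addb -mulrA mulr_signCA.
Qed.

Lemma scomm_signl b s (x y : R) : scomm s ((-1) ^+ b * x) y = (-1) ^+ b * scomm s x y.
Proof. by rewrite /scomm mulrBr -mulrA (mulr_signCA y) (mulr_signCA ((-1) ^+ s)). Qed.

Lemma scomm_suml (I : Type) (r : seq I) (P : pred I) (F : I -> R) s y :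
  scomm s (\sum_(i <- r | P i) F i) y = \sum_(i <- r | P i) scomm s (F i) y.
Proof. by rewrite /scomm mulr_suml mulr_sumr mulr_sumr -sumrB. Qed.

End RingFacts.

Section TwistedProduct.
Variables (N : nat) (R : pzRingType) (A : lalgType R).
Implicit Types (g h : idx N -> idx N -> A) (i j k l : idx N).

Definition tmul g h i j := \sum_a g i a * ((-1) ^+ bar a * h a j).

(* The relation of [qN_rel] with F_(-i,l), F_(k,-j) rewritten as F_(i,-l), F_(-k,j). *)
Definition qN_bracket g s i j k l :=
  (k == j)%:R * g i l + (k == negi j)%:R * g i (negi l)
  - (-1) ^+ s * ((i == l)%:R * g k j + (negi i == l)%:R * g (negi k) j).

Lemma sum_mul_bracket g h i j k l q :
  \sum_a g i a * ((-1) ^+ bar a * qN_bracket h (par a j && q) a j k l) =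
  (k == j)%:R * tmul g h i l + (k == negi j)%:R * tmul g h i (negi l)
  - ((-1) ^+ (bar l (+) (par l j && q)) * (g i l * h k j)
     + (-1) ^+ (bar (negi l) (+) (par (negi l) j && q)) * (g i (negi l) * h (negi k) j)).
Proof.
under eq_bigr => a _ do rewrite /qN_bracket !(mulrBr, mulrDr) !mulr_natCA.
rewrite sumrB !big_split /= /tmul !mulr_sumr; congr (_ - (_ + _)).
- by rewrite sumr_delta signr_addb -mulrA !(mulr_signCA (g i l)).
- under eq_bigr => a _ do rewrite -eq_negi.
  by rewrite sumr_delta signr_addb -mulrA !(mulr_signCA (g i (negi l))).
Qed.

Lemma sum_bracket_mul g h i j k l q :
  \sum_a (-1) ^+ (par a j && q) *
         (qN_bracket g (par i a && q) i a k l * ((-1) ^+ bar a * h a j)) =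
  (-1) ^+ (bar k (+) (par k j && q)) * (g i l * h k j)
  + (-1) ^+ (bar (negi k) (+) (par (negi k) j && q)) * (g i (negi l) * h (negi k) j)
  - (-1) ^+ (par i j && q) *
      ((i == l)%:R * tmul g h k j + (negi i == l)%:R * tmul g h (negi k) j).
Proof.
under eq_bigr => a _ do rewrite /qN_bracket mulrBl mulrDl mulrBr mulrDr.
rewrite sumrB big_split /=; congr (_ + _ - _).
- under eq_bigr => a _ do rewrite -!mulrA mulr_natCA eq_sym.
  by rewrite sumr_delta addbC signr_addb -mulrA (mulr_signCA (g i l)).
- under eq_bigr => a _ do rewrite -!mulrA mulr_natCA eq_sym -eq_negi.
  by rewrite sumr_delta addbC signr_addb -mulrA (mulr_signCA (g i (negi l))).
- rewrite /tmul !mulr_sumr -big_split mulr_sumr; apply: eq_bigr => a _.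
  by rewrite (par_split i a j) signr_addb -!mulrA mulr_signCA mulrDl -!mulrA.
Qed.

Lemma scomm_tmul g h (F : A) k l
    (Hg : forall i a, scomm (par i a && par k l) (g i a) F =
                      qN_bracket g (par i a && par k l) i a k l)
    (Hh : forall a j, scomm (par a j && par k l) (h a j) F =
                      qN_bracket h (par a j && par k l) a j k l) i j :
  scomm (par i j && par k l) (tmul g h i j) F =
  qN_bracket (tmul g h) (par i j && par k l) i j k l.
Proof.
rewrite [in LHS]/tmul scomm_suml.
under eq_bigr => a _ do rewrite (par_split i a j) scommMl scomm_signl Hh Hg.
rewrite big_split /= sum_mul_bracket sum_bracket_mul.
(* The boundary terms of the two sums cancel. *)
rewrite bar_addb_par.
have := bar_addb_par j (negi k) (negi l); rewrite par_negi => ->.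
by rewrite subrKA.
Qed.

End TwistedProduct.

Section Casimir.
Variables (N : nat) (R : pzRingType) (A : lalgType R) (f : idx N -> idx N -> A).
Hypothesis hf : qN_rel f.

Lemma CmS m : Cm f m.+1 = tmul f (Cm f m).
Proof. by []. Qed.

Lemma scomm_f i j k l :
  scomm (par i j && par k l) (f i j) (f k l) = qN_bracket f (par i j && par k l) i j k l.
Proof.
case: hf => hf1 hf2; rewrite /scomm hf2 /qN_bracket.
have -> : f (negi i) l = f i (negi l) by rewrite -hf1 negiK.
have -> : f k (negi j) = f (negi k) j by rewrite -[in RHS]hf1 negiK.
by rewrite mulrDr opprD addrACA addrA.
Qed.

Lemma scomm_Cm m i j k l :
  scomm (par i j && par k l) (Cm f m i j) (f k l) =
  qN_bracket (Cm f m) (par i j && par k l) i j k l.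
Proof.
elim: m i j => [|m IH] i j; first exact: scomm_f.
by rewrite CmS; apply: scomm_tmul => [i' a | a j']; [exact: scomm_f | exact: IH].
Qed.

Lemma Cm_negi m i j : Cm f m (negi i) (negi j) = (-1) ^+ m * Cm f m i j.
Proof.
elim: m i j => [|m IH] i j; first by rewrite /= hf.1 expr0 mul1r.
rewrite CmS /tmul (reindex_inj (@negi_inj N)) mulr_sumr; apply: eq_bigr => a _ /=.
rewrite hf.1 IH signrN exprS mulN1r !mulNr mulrN; congr (- _).
by rewrite (mulr_signCA ((-1) ^+ a.1)) (mulr_signCA (f i a)).
Qed.

Lemma sigma_Cm (sigma : {rmorphism A -> A})
    (hsigma : forall i j, sigma (f i j) = (-1) ^+ par i j * f i j) m i j :
  sigma (Cm f m i j) = (-1) ^+ par i j * Cm f m i j.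
Proof.
elim: m i j => [|m IH] i j; first exact: hsigma.
rewrite CmS /tmul rmorph_sum mulr_sumr; apply: eq_bigr => a _.
rewrite !rmorphM rmorph_sign hsigma IH (mulr_signCA ((-1) ^+ bar a)) -mulrA.
rewrite (mulr_signCA (f i a)) (mulrA ((-1) ^+ par i a)) -signr_addb.
by rewrite /par; case: (bar i); case: (bar a); case: (bar j).
Qed.

Lemma cn_sign n : cn f n = (-1) ^+ n.-1 * cn f n.
Proof.
rewrite {1}/cn (reindex_inj (@negi_inj N)) mulr_sumr.
by apply: eq_bigr => i _; rewrite /Cn Cm_negi.
Qed.

Lemma cn_central n k l : cn f n * f k l = f k l * cn f n.
Proof.
apply/eqP; rewrite -subr_eq0; apply/eqP.
have scomm_diag i : Cm f n.-1 i i * f k l - f k l * Cm f n.-1 i i =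
                    qN_bracket (Cm f n.-1) false i i k l.
  by have := scomm_Cm n.-1 i i k l; rewrite /par addbb /scomm /= expr0 mul1r.
rewrite /cn /Cn mulr_suml mulr_sumr -sumrB.
under eq_bigr => i _ do
  rewrite scomm_diag /qN_bracket expr0 mul1r (eq_sym k) (eq_sym k) -!eq_negi.
by rewrite sumrB !big_split /= !sumr_delta subrr.
Qed.

End Casimir.

Lemma fixed_oppr_eq0 (K : fieldType) (V : lmodType K) (x : V) :
  [pchar K] =i pred0 -> x = - x -> x = 0.
Proof.
move=> charK x_opp; have two_neq0 : (2%:R : K) != 0 by rewrite (pcharf0P K).1.
have two_x : (2%:R : K) *: x = 0 by rewrite scaler_nat mulr2n {1}x_opp addNr.
by rewrite -[x]scale1r -(mulVf two_neq0) -scalerA two_x scaler0.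
Qed.

Unset Implicit Arguments.

Theorem mainTheorem2 (K : fieldType) (charK : [pchar K] =i pred0)
    (N : nat) (hN : (0 < N)%N)
    (A : algType K) (f : idx N -> idx N -> A) (hf : qN_rel f) :
  (forall (n : nat) (i j : idx N), (0 < n)%N ->
     Cn f n (negi i) (negi j) = (-1) ^+ n.-1 * Cn f n i j)
  /\ (forall sigma : {rmorphism A -> A},
        (forall i j : idx N, sigma (f i j) = (-1) ^+ par i j * f i j) ->
        forall n : nat, (0 < n)%N -> sigma (cn f n) = cn f n)
  /\ (forall (n : nat) (k l : idx N), (0 < n)%N ->
        cn f n * f k l = f k l * cn f n)
  /\ (forall n : nat, (0 < n)%N -> ~~ odd n -> cn f n = 0).
Proof.
split; first by move=> n i j _; rewrite /Cn Cm_negi.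
split.
  move=> sigma hsigma n _; rewrite /cn rmorph_sum; apply: eq_bigr => i _.
  by rewrite /Cn sigma_Cm // /par addbb expr0 mul1r.
split; first by move=> n k l _; apply: cn_central.
case=> [//|n] _; rewrite /= negbK => n_odd; apply: fixed_oppr_eq0 charK _.
by rewrite {1}(cn_sign hf) /= -signr_odd n_odd expr1 mulN1r.
Qed.
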